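(* Let $i\in\{1,2\}$, let $Z$ be a digital image and $\tau:Z\times Z\to Z$ an $\mathrm{NP}_i$-continuous map. Let $X=Z\sqcup\{e\}$ be the disjoint union, where the new point $e$ is adjacent only to itself, and define $\mu:X\times X\to X$ by $\mu(a,b)=\tau(a,b)$ if $a,b\in Z$, $\mu(a,e)=a$, and $\mu(e,b)=b$. Then $\mu$ is $\mathrm{NP}_i$-continuous and $(X,e,\mu)$ is a unital $\mathrm{NP}_i$-digital H-space. Moreover, if some connected component of $Z$ is not $\mathrm{NP}_i$-contractible, then $(X,e,\mu)$ is not H-equivalent to any $\mathrm{NP}_i$-digital topological group.
   Context: A digital image is a finite set with a reflexive symmetric adjacency relation (a finite reflexive graph); continuous maps send adjacent points to adjacent points. On products, $\mathrm{NP}_u$ declares two tuples adjacent iff coordinates are adjacent in at most $u$ positions and equal elsewhere. An $\mathrm{NP}_i$-homotopy from $f$ to $g:X\to Y$ is an $\mathrm{NP}_i$-continuous $H:X\times[0,m]_{\mathbb{Z}}\to Y$ with $H(\cdot,0)=f$, $H(\cdot,m)=g$; write $f\simeq_i g$. $\mathrm{NP}_i$-contractible means $\mathrm{NP}_i$-homotopy equivalent to a single point. $(f,g)(x)=(f(x),g(x))$, $(f\times g)(x,y)=(f(x),g(y))$; $c_e$ is constant at $e$. An $\mathrm{NP}_i$-digital H-space is $(X,e,\mu)$ with $\mu:X\times X\to X$ $\mathrm{NP}_i$-continuous, $\mu\circ(\mathrm{id}_X,c_e)\simeq_i\mathrm{id}_X$, $\mu\circ(c_e,\mathrm{id}_X)\simeq_i\mathrm{id}_X$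 (homotopies need not be pointed); unital if both composites equal $\mathrm{id}_X$. An $\mathrm{NP}_i$-digital topological group is a digital image $G$ with a group structure whose multiplication $G\times G\to G$ is $\mathrm{NP}_i$-continuous and whose inversion $G\to G$ is continuous; it is regarded as an H-space with its identity element and multiplication. Two H-spaces $(X,e_X,\mu_X)$, $(Y,e_Y,\mu_Y)$ are H-equivalent if there are continuous pointed maps $f:(X,e_X)\to(Y,e_Y)$, $g:(Y,e_Y)\to(X,e_X)$ with $f\circ g\simeq_i\mathrm{id}_Y$, $g\circ f\simeq_i\mathrm{id}_X$, $f\circ\mu_X\simeq_i\mu_Y\circ(f\times f)$, $g\circ\mu_Y\simeq_i\mu_X\circ(g\times g)$. *)

From mathcomp Require Import all_boot.
Unset Printing Implicit Defensive.

Record dimage := DImage {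
  carrier :> finType;
  adj : rel carrier;
  adj_refl : reflexive adj;
  adj_sym : symmetric adj }.
Arguments adj {_}.
Arguments adj_refl {_}.
Arguments adj_sym {_}.
Arguments DImage {carrier adj}.

Definition dcont (X Y : dimage) (f : X -> Y) : Prop :=
  forall x y : X, adj x y -> adj (f x) (f y).
Arguments dcont {X Y}.

Definition np_adj (u : nat) (X Y : dimage) : rel (prod X Y) :=
  fun p q => [&& adj p.1 q.1, adj p.2 q.2 &
                 ((p.1 != q.1) + (p.2 != q.2) <= u)%N].

Lemma np_adj_refl u (X Y : dimage) : reflexive (@np_adj u X Y).
Proof. by move=> [x y]; rewrite /np_adj /= !adj_refl !eqxx. Qed.

Lemma np_adj_sym u (X Y : dimage) : symmetric (@np_adj u X Y).
Proof.
by move=> [x y] [x' y']; rewrite /np_adj /= (adj_sym x) (adj_sym y)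
  (eq_sym x) (eq_sym y).
Qed.

Definition NP (u : nat) (X Y : dimage) : dimage :=
  DImage (np_adj_refl u X Y) (np_adj_sym u X Y).

Definition int_adj (m : nat) : rel 'I_m.+1 :=
  fun a b => (a <= b.+1)%N && (b <= a.+1)%N.

Lemma int_adj_refl m : reflexive (@int_adj m).
Proof. by move=> a; rewrite /int_adj leqnSn. Qed.

Lemma int_adj_sym m : symmetric (@int_adj m).
Proof. by move=> a b; rewrite /int_adj andbC. Qed.

Definition interval (m : nat) : dimage :=
  DImage (int_adj_refl m) (int_adj_sym m).

Definition np_homotopic (i : nat) (X Y : dimage) (f g : X -> Y) : Prop :=
  exists m : nat, exists H : NP i X (interval m) -> Y,
    [/\ dcont H,
        forall x : X, H (x, ord0) = f x &
        forall x : X, H (x, ord_max) = g x].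
Arguments np_homotopic i {X Y}.

Definition point_adj : rel unit := fun _ _ => true.
Lemma point_adj_refl : reflexive point_adj. Proof. by []. Qed.
Lemma point_adj_sym : symmetric point_adj. Proof. by []. Qed.
Definition point : dimage := DImage point_adj_refl point_adj_sym.

Definition np_homotopy_equiv (i : nat) (X Y : dimage) : Prop :=
  exists (f : X -> Y) (g : Y -> X),
    [/\ dcont f, dcont g,
        np_homotopic i (fun y => f (g y)) id &
        np_homotopic i (fun x => g (f x)) id].

Definition np_contractible (i : nat) (X : dimage) : Prop :=
  np_homotopy_equiv i X point.

Definition sub_adj (Z : dimage) (A : {set Z}) : rel {x : Z | x \in A} :=
  fun a b => adj (val a) (val b).
Lemma sub_adj_refl (Z : dimage) (A : {set Z}) : reflexive (@sub_adj Z A).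
Proof. by move=> a; exact: adj_refl. Qed.
Lemma sub_adj_sym (Z : dimage) (A : {set Z}) : symmetric (@sub_adj Z A).
Proof. by move=> a b; exact: adj_sym. Qed.
Definition subimage (Z : dimage) (A : {set Z}) : dimage :=
  DImage (sub_adj_refl Z A) (sub_adj_sym Z A).

Definition component (Z : dimage) (z : Z) : {set Z} :=
  [set y | connect (@adj Z) z y].

Definition is_Hspace (i : nat) (X : dimage) (e : X) (mu : NP i X X -> X) : Prop :=
  [/\ dcont mu,
      np_homotopic i (fun x : X => mu (x, e)) id &
      np_homotopic i (fun x : X => mu (e, x)) id].

Definition is_unital_Hspace (i : nat) (X : dimage) (e : X)
    (mu : NP i X X -> X) : Prop :=
  [/\ is_Hspace i X e mu,
      forall x : X, mu (x, e) = x &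
      forall x : X, mu (e, x) = x].

Definition is_group (G : Type) (one : G) (mul : G -> G -> G) (inv : G -> G)
  : Prop :=
  [/\ forall x y z, mul x (mul y z) = mul (mul x y) z,
      forall x, mul one x = x, forall x, mul x one = x,
      forall x, mul (inv x) x = one & forall x, mul x (inv x) = one].

Definition is_topgroup (i : nat) (G : dimage) (one : G) (mul : G -> G -> G)
    (inv : G -> G) : Prop :=
  [/\ is_group G one mul inv,
      dcont (fun p : NP i G G => mul p.1 p.2) & dcont inv].

Definition H_equivalent (i : nat) (X : dimage) (eX : X) (muX : NP i X X -> X)
    (Y : dimage) (eY : Y) (muY : NP i Y Y -> Y) : Prop :=
  exists (f : X -> Y) (g : Y -> X),
    [/\ dcont f /\ dcont g, f eX = eY /\ g eY = eX,
        np_homotopic i (fun y => f (g y)) id /\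
        np_homotopic i (fun x => g (f x)) id,
        np_homotopic i (fun p : NP i X X => f (muX p))
                       (fun p : NP i X X => muY (f p.1, f p.2)) &
        np_homotopic i (fun p : NP i Y Y => g (muY p))
                       (fun p : NP i Y Y => muX (g p.1, g p.2))].

(* X = Z disjoint-union {e}, with e = None adjacent only to itself *)
Definition adjoin_adj (Z : dimage) : rel (option Z) :=
  fun a b => match a, b with
             | Some x, Some y => adj x y
             | None, None => true
             | _, _ => false end.
Lemma adjoin_adj_refl (Z : dimage) : reflexive (@adjoin_adj Z).
Proof. by case=> //= x; exact: adj_refl. Qed.
Lemma adjoin_adj_sym (Z : dimage) : symmetric (@adjoin_adj Z).
Proof. by case=> [x|] [y|] //=; exact: adj_sym. Qed.
Definition adjoin_point (Z : dimage) : dimage :=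
  DImage (adjoin_adj_refl Z) (adjoin_adj_sym Z).

Definition adjoin_mu (Z : dimage) (tau : Z -> Z -> Z)
    (p : option Z * option Z) : option Z :=
  match p with
  | (Some a, Some b) => Some (tau a b)
  | (a, None) => a
  | (None, b) => b
  end.

(* The unital structure is forced by construction, and continuity of [mu] only
   has to be checked on pairs of the same shape, since the new point [e] is
   adjacent to nothing else.  For the second part, suppose [f : X -> G] and
   [g : G -> X] form a pointed homotopy equivalence with a digital group [G],
   and let [C] be the component of [z] in [Z].  For [i >= 1] left translations
   of [G] are continuous, so [w |-> g (f z)^-1 f w] maps [C] continuously into
   the component of [g 1 = e], which is [{e}].  Translating back by [f z] and
   using [f g ~ id], then [g f ~ id], shows that the inclusion [C -> X] is
   homotopic to a constant map; composing with a retraction of [X] onto [C]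
   makes [id_C] homotopic to a constant, so [C] is contractible. *)

From mathcomp Require Import all_boot zify.

Section Homotopy.

Context {i : nat} {X Y : dimage}.

Lemma dcont_id : dcont (@id X).
Proof. by []. Qed.

Lemma dcont_comp {W : dimage} {f : X -> Y} {h : Y -> W} :
  dcont f -> dcont h -> dcont (fun x => h (f x)).
Proof. by move=> cf ch x x' xx'; apply/ch/cf. Qed.

Lemma np_adj_shift k {m n} {x x' : X} {t t' : interval m} {s s' : interval n} :
  k + s = t -> k + s' = t' ->
  @adj (NP i X (interval m)) (x, t) (x', t') ->
  @adj (NP i X (interval n)) (x, s) (x', s').
Proof.
move=> ts ts' /and3P [/= xx' /andP [tt' t't] cnt]; apply/and3P; split=> //=.
  by rewrite /int_adj; apply/andP; split; lia.
suff -> : (s == s') = (t == t') by [].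
by rewrite -!val_eqE /= -(eqn_add2l k) ts ts'.
Qed.

Lemma np_homotopic_refl {f : X -> Y} : dcont f -> np_homotopic i f f.
Proof.
move=> cf; exists 0, (fun p : NP i X (interval 0) => f p.1).
by split=> // -[x t] [x' t'] /and3P [xx' _ _]; apply: cf.
Qed.

Lemma eq_np_homotopic {f g f' g' : X -> Y} :
  np_homotopic i f g -> f =1 f' -> g =1 g' -> np_homotopic i f' g'.
Proof.
by move=> [m [H [cH Hf Hg]]] ff' gg'; exists m, H; split=> // x;
  rewrite ?Hf ?Hg.
Qed.

Lemma np_homotopic_comp_left {W : dimage} {f g : X -> Y} {h : Y -> W} :
  dcont h -> np_homotopic i f g ->
  np_homotopic i (fun x => h (f x)) (fun x => h (g x)).
Proof.
move=> ch [m [H [cH Hf Hg]]]; exists m, (fun p => h (H p)).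
by split=> [p p' pp'|x|x]; rewrite ?Hf ?Hg //; apply/ch/cH.
Qed.

Lemma np_homotopic_comp_right {V : dimage} {f g : X -> Y} {h : V -> X} :
  dcont h -> np_homotopic i f g ->
  np_homotopic i (fun v => f (h v)) (fun v => g (h v)).
Proof.
move=> ch [m [H [cH Hf Hg]]].
exists m, (fun p : NP i V (interval m) => H (h p.1, p.2)).
split=> [[v t] [v' t'] /and3P [/= vv' tt' cnt]|v|v] /=; rewrite ?Hf ?Hg //.
apply: cH; apply/and3P; split=> //=; first exact: ch.
apply: leq_trans cnt; rewrite leq_add2r.
by case: (v =P v') => [->|_]; rewrite ?eqxx ?leq_b1.
Qed.

Lemma np_homotopic_trans {f g h : X -> Y} :
  np_homotopic i f g -> np_homotopic i g h -> np_homotopic i f h.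
Proof.
move=> [m [H1 [cH1 H1f H1g]]] [n [H2 [cH2 H2g H2h]]].
pose H (p : NP i X (interval (m + n))) : Y :=
  if p.2 <= m then H1 (p.1, inord p.2) else H2 (p.1, inord (p.2 - m)).
have H_right x (t : interval (m + n)) :
    m <= t -> H (x, t) = H2 (x, inord (t - m)).
  move=> mt; rewrite /H /=; case: leqP => // tm.
  have tE : nat_of_ord t = m by lia.
  have -> : inord t = ord_max :> interval m by apply: val_inj; rewrite /= tE inordK.
  have -> : inord (t - m) = ord0 :> interval n.
    by apply: val_inj; rewrite /= tE subnn inordK.
  by rewrite H1g H2g.
exists (m + n), H; split.
- move=> [x t] [x' t'] xtx't'.
  have /andP [tt' t't] : (t <= t'.+1) && (t' <= t.+1) by case/and3P: xtx't'.
  have := ltn_ord t; have := ltn_ord t'.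
  case: (boolP ((t <= m) && (t' <= m))) => [/andP [tm t'm] | tm] lt' lt.
    rewrite /H /= tm t'm; apply/cH1/(np_adj_shift 0 _ _ xtx't');
      rewrite add0n inordK //; lia.
  rewrite !H_right; try lia.
  by apply/cH2/(np_adj_shift m _ _ xtx't'); rewrite inordK; lia.
- move=> x; rewrite /H /=.
  by have -> : inord 0 = ord0 :> interval m by apply: val_inj; rewrite /= inordK.
- move=> x; rewrite H_right /= ?leq_addr //.
  have -> : inord (m + n - m) = ord_max :> interval n.
    by apply: val_inj; rewrite /= addKn inordK.
  exact: H2h.
Qed.

End Homotopy.

Lemma np_contractible_of_homotopic_const (i : nat) (X : dimage) (x : X) :
  np_homotopic i (fun _ : X => x) id -> np_contractible i X.
Proof.
move=> constx; exists (fun _ => tt), (fun _ => x); split=> //.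
  by move=> * /=; apply: adj_refl.
by apply: eq_np_homotopic (np_homotopic_refl dcont_id) _ _; case.
Qed.

Lemma dcont_np_left (i : nat) (X Y W : dimage) (h : X -> Y -> W) :
  0 < i -> dcont (fun p : NP i X Y => h p.1 p.2) -> forall x, dcont (h x).
Proof.
move=> i_gt0 ch x y y' yy'; apply: (ch (x, y) (x, y')).
by rewrite /= /np_adj /= adj_refl yy' eqxx /= (leq_trans (leq_b1 _)).
Qed.

Lemma unital_Hspace (i : nat) (X : dimage) (e : X) (mu : NP i X X -> X) :
  dcont mu -> (forall x, mu (x, e) = x) -> (forall x, mu (e, x) = x) ->
  is_unital_Hspace i X e mu.
Proof.
move=> cmu mu_x_e mu_e_x.
split=> //; split=> //;
  by apply: eq_np_homotopic (np_homotopic_refl dcont_id) _ _ => x /=;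
  rewrite ?mu_x_e ?mu_e_x.
Qed.

Section Components.

Context {Z : dimage}.

Lemma dcont_connect {Y : dimage} {h : Z -> Y} {a b : Z} :
  dcont h -> connect adj a b -> connect adj (h a) (h b).
Proof.
move=> ch /connectP [p]; elim: p a => [|c p IHp] a /= => [_ -> //|].
case/andP=> ac cp bE; apply: connect_trans (IHp c cp bE).
exact/connect1/ch.
Qed.

Lemma mem_component (z : Z) : z \in component Z z.
Proof. by rewrite inE connect0. Qed.

Lemma component_adj {z v v' : Z} :
  v \in component Z z -> adj v v' -> v' \in component Z z.
Proof. by rewrite !inE => zv vv'; apply: connect_trans zv (connect1 vv'). Qed.

(* Sends everything outside the component of [z] to [z]. *)
Definition component_retraction (z : Z) (v : Z) : subimage Z (component Z z) :=
  insubd (exist _ z (mem_component z)) v.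

Lemma dcont_component_retraction (z : Z) : dcont (component_retraction z).
Proof.
move=> v v' vv'; rewrite /= /sub_adj !val_insubd /=.
case: ifP => zv; case: ifP => zv' //; last exact: adj_refl.
  by rewrite (component_adj zv vv') in zv'.
by rewrite adj_sym in vv'; rewrite (component_adj zv' vv') in zv.
Qed.

Lemma component_retractionK (z : Z) (w : subimage Z (component Z z)) :
  component_retraction z (val w) = w.
Proof. exact: valKd. Qed.

Lemma connect_adjoin_point (v : adjoin_point Z) :
  connect adj (None : adjoin_point Z) v -> v = None.
Proof.
move=> /connectP [p]; elim: p => [|[c|] p IHp] //= _ ->; exact: IHp.
Qed.

Lemma dcont_odflt (z : Z) : dcont (fun v : adjoin_point Z => odflt z v).
Proof. by move=> [v|] [v'|] //= _; apply: adj_refl. Qed.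

Lemma dcont_Some : dcont (fun v : Z => Some v : adjoin_point Z).
Proof. by []. Qed.

Lemma dcont_adjoin_mu (i : nat) (tau : Z -> Z -> Z) :
  dcont (fun p : NP i Z Z => tau p.1 p.2) ->
  dcont (adjoin_mu Z tau : NP i (adjoin_point Z) (adjoin_point Z) -> adjoin_point Z).
Proof.
move=> ctau [[a|] [b|]] [[a'|] [b'|]] /and3P [/= aa' bb' cnt] //.
by apply: (ctau (a, b) (a', b')); apply/and3P.
Qed.

End Components.

Section GroupEquivalence.

Context {i : nat} {Z G : dimage} {one : G} {mul : G -> G -> G} {inv : G -> G}.
Hypotheses (i_gt0 : 0 < i) (Ggroup : is_topgroup i G one mul inv).
Context {f : adjoin_point Z -> G} {g : G -> adjoin_point Z}.
Hypotheses (cf : dcont f) (cg : dcont g) (f_e : f None = one) (g_one : g one = None).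
Hypotheses (fg : np_homotopic i (fun x => f (g x)) id)
           (gf : np_homotopic i (fun v => g (f v)) id).

Let dcont_mul x : dcont (mul x).
Proof. by case: Ggroup => _ cmul _; exact: dcont_np_left cmul x. Qed.

Lemma translate_component_to_base (z : Z) (w : subimage Z (component Z z)) :
  g (mul (inv (f (Some z))) (f (Some (val w)))) = None.
Proof.
case: Ggroup => -[_ _ _ mulVg _] _ _.
pose h (v : Z) := g (mul (inv (f (Some z))) (f (Some v))).
have ch : dcont h :=
  dcont_comp (dcont_comp (dcont_comp (@dcont_Some Z) cf) (dcont_mul _)) cg.
have := valP w; rewrite inE => /(dcont_connect ch).
by rewrite /h mulVg g_one => /connect_adjoin_point.
Qed.

Lemma component_contractible_of_group_equiv (z : Z) :
  np_contractible i (subimage Z (component Z z)).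
Proof.
case: Ggroup => -[mulA mul1g mulg1 mulVg mulgV] _ _.
set y := f (Some z); set C := subimage Z (component Z z).
pose s (w : C) : adjoin_point Z := Some (val w).
pose u (w : C) := mul (inv y) (f (s w)).
have cs : dcont s by [].
have cu : dcont u := dcont_comp (dcont_comp cs cf) (dcont_mul _).
have const_s : np_homotopic i (fun _ : C => g y) (fun w => g (f (s w))).
  apply: eq_np_homotopic (np_homotopic_comp_left (dcont_comp (dcont_mul y) cg)
                            (np_homotopic_comp_right cu fg)) _ _ => w /=.
    by rewrite /u /s translate_component_to_base f_e mulg1.
  by rewrite /u mulA mulgV mul1g.
have retract := dcont_comp (dcont_odflt z) (dcont_component_retraction z).
apply: np_contractible_of_homotopic_const.
apply: eq_np_homotopic (np_homotopic_comp_left retract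
          (np_homotopic_trans const_s (np_homotopic_comp_right cs gf))) _ _ => // w.
exact: component_retractionK.
Qed.

End GroupEquivalence.

Theorem mainTheorem14 (i : nat) (hi : i = 1 \/ i = 2) (Z : dimage)
    (tau : Z -> Z -> Z)
    (htau : dcont (fun p : NP i Z Z => tau p.1 p.2)) :
  let X := adjoin_point Z in
  let e : X := None in
  let mu : NP i X X -> X := adjoin_mu Z tau in
  [/\ dcont mu,
      is_unital_Hspace i X e mu &
      (exists z : Z, ~ np_contractible i (subimage Z (component Z z))) ->
      forall (G : dimage) (one : G) (mul : G -> G -> G) (inv : G -> G),
        is_topgroup i G one mul inv ->
        ~ H_equivalent i X e mu G one (fun p : NP i G G => mul p.1 p.2)].
Proof.
move=> X e mu.
have i_gt0 : 0 < i by case: hi => ->.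
have cmu : dcont mu by exact: dcont_adjoin_mu.
split=> //; first by apply: unital_Hspace => // -[].
move=> [z not_contractible] G one mul inv Ggroup
  [f [g [[cf cg] [f_e g_one] [fg gf] _ _]]].
exact/not_contractible/(component_contractible_of_group_equiv i_gt0 Ggroup cf cg
  f_e g_one fg gf).
Qed.
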